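(* (a) Let $M\subset\mathcal P(\Omega_1)$, $N\subset\mathcal P(\Omega_2)$ be submanifolds and $\varphi:M\to N$, $\psi:N\to M$ Markov maps with $\psi\circ\varphi=\mathrm{id}_M$. Let $p\in M$, $q\in N$ with $q=\varphi(p)$ and $p=\psi(q)$. Then $\psi^*_q:T_p^*(M)\to T^*_q(N)$ is an isometry for the Fisher co-metrics: $g_{M,p}(\alpha_p,\beta_p)=g_{N,q}(\psi^*_q\alpha_p,\psi^*_q\beta_p)$ for all $\alpha_p,\beta_p\in T^*_p(M)$. (b) For every Markov co-embedding $\Psi:\mathcal P(\Omega_2)\to\mathcal P(\Omega_1)$, every $q\in\mathcal P(\Omega_2)$ (not only $q$ in the image of a given embedding) and all $\alpha,\beta\in T^*_{\Psi(q)}(\mathcal P(\Omega_1))$: $g_{\Psi(q)}(\alpha,\beta)=g_q(\Psi^*_q\alpha,\Psi_q^*\beta)$.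
   Context: For a finite set $\Omega$, $\mathcal P(\Omega)$ is the manifold of strictly positive probability distributions. A Markov map $\mathcal P(\Omega_1)\to\mathcal P(\Omega_2)$ is a map $p\mapsto\sum_xW(\cdot|x)p(x)$ for a surjective channel $W$ (equivalently an affine map between these sets); a Markov map between submanifolds $M\to N$ is the restriction of such a map. A Markov map $\Phi:\mathcal P(\Omega_1)\to\mathcal P(\Omega_2)$ is a Markov embedding if some Markov map $\Psi:\mathcal P(\Omega_2)\to\mathcal P(\Omega_1)$ satisfies $\Psi\circ\Phi=\mathrm{id}$; such $\Psi$ is called a Markov co-embedding. $\psi^*_q$ denotes the transpose of $(d\psi)_q:T_q(N)\to T_p(M)$. The Fisher metric is $g_p(X,Y)=\sum_\omega X^{(m)}(\omega)Y^{(m)}(\omega)/p(\omega)$ (m-representations); $g_M,g_N$ are its restrictions to $M,N$, and the same symbols denote the dual inner products (Fisher co-metrics) on cotangent spaces. On $\mathcal P(\Omega)$ the Fisher co-metric satisfies $g_p((d\langle A\rangle)_p,(d\langle B\rangle)_p)=\mathrm{Cov}_p(A,B)$. *)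

From HB Require Import structures.
From mathcomp Require Import all_boot all_order all_algebra.
From mathcomp Require Import all_classical all_reals all_analysis.
Set Implicit Arguments. Unset Strict Implicit. Unset Printing Implicit Defensive.
Import Order.TTheory GRing.Theory Num.Theory.
Import numFieldNormedType.Exports.
Local Open Scope classical_set_scope.
Local Open Scope ring_scope.

(* Finite set Omega = 'I_n; distributions / tangent vectors (m-representation)
   are row vectors 'rV[R]_n, p 0 i = p(i). *)

Section Defs.
Variable R : realType.

Definition Pdist (n : nat) : set 'rV[R]_n :=
  [set p | (forall i, 0 < p 0 i) /\ \sum_i p 0 i = 1].
Arguments Pdist n : clear implicits.

(* W x y = W(y|x); surjective channel: every output has positive probability
   from some input (so that the Markov map sends P(Omega1) into P(Omega2)). *)
Definition surj_channel (n1 n2 : nat) (W : 'M[R]_(n1, n2)) : Prop :=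
  [/\ (forall x y, 0 <= W x y), (forall x, \sum_y W x y = 1)
    & (forall y, exists x, 0 < W x y)].

Definition markov_map (n1 n2 : nat) (W : 'M[R]_(n1, n2)) (p : 'rV[R]_n1) :
  'rV[R]_n2 := p *m W.

Definition iterD {V W : normedModType R} (vs : seq V) (f : V -> W) : V -> W :=
  foldr (fun v g => fun x => derive g x v) f vs.

Definition smooth_on {V W : normedModType R} (U : set V) (f : V -> W) : Prop :=
  forall (vs : seq V) (x : V), U x ->
    {for x, continuous (iterD vs f)} /\ (forall v, derivable (iterD vs f) x v).

Definition slice (n d : nat) : set 'rV[R]_n :=
  [set x | forall i : 'I_n, (d <= i)%N -> x 0 i = 0].
Arguments slice n d : clear implicits.

Definition submanifold (n : nat) (M : set 'rV[R]_n) : Prop :=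
  M `<=` Pdist n /\
  forall p, M p -> exists (U : set 'rV[R]_n) (d : nat)
                          (Phi Phiinv : 'rV[R]_n -> 'rV[R]_n),
    [/\ open U /\ U p, smooth_on U Phi, open (Phi @` U),
        smooth_on (Phi @` U) Phiinv
      & (forall x, U x -> Phiinv (Phi x) = x /\ (M x <-> slice n d (Phi x)))].

Definition tangentSpace (n : nat) (M : set 'rV[R]_n) (p : 'rV[R]_n) :
  set 'rV[R]_n :=
  [set X | exists (gam : R^o -> 'rV[R]_n) (e : R),
     [/\ 0 < e, smooth_on `]-e, e[ gam, gam 0 = p,
         (forall t, -e < t < e -> M (gam t)) & derive gam 0 1 = X]].

Definition fisher (n : nat) (p X Y : 'rV[R]_n) : R :=
  \sum_i X 0 i * Y 0 i / p 0 i.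

(* A cotangent vector on the tangent space T: a function linear on T
   (only its values on T matter). *)
Definition is_covector (n : nat) (T : set 'rV[R]_n) (a : 'rV[R]_n -> R) : Prop :=
  forall (c : R) X Y, T X -> T Y -> a (c *: X + Y) = c * a X + a Y.

Definition sharp (n : nat) (T : set 'rV[R]_n) (p : 'rV[R]_n)
  (a : 'rV[R]_n -> R) : 'rV[R]_n :=
  xget 0 [set u | T u /\ forall X, T X -> fisher p u X = a X].

Definition cometric (n : nat) (T : set 'rV[R]_n) (p : 'rV[R]_n)
  (a b : 'rV[R]_n -> R) : R :=
  fisher p (sharp T p a) (sharp T p b).

(* Transpose of the differential of the Markov map of V (X |-> X V):
   psi^* alpha = alpha o d psi. *)
Definition pullback (n2 n1 : nat) (V : 'M[R]_(n2, n1)) (a : 'rV[R]_n1 -> R) :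
  'rV[R]_n2 -> R := fun Y => a (Y *m V).

End Defs.
Arguments Pdist {R} n.
Arguments slice {R} n d.

(* The co-metric statement reduces to an adjointness relation.  Suppose F maps
   T_p(M) into T_q(N), G maps T_q(N) into T_p(M), uFG = u on T_p(M) and
   g_q(uF, Y) = g_p(u, YG).  Then the Fisher-Riesz representative of the
   pullback of a covector by G is the representative of the covector pushed by
   F, and the two co-metrics agree.

   In (a) take F = W.  The Fisher metric is monotone under Markov maps, so
   Y |-> g_q(Y, Y) - g_p(YV, YV) is a nonnegative quadratic form; it vanishes at
   uW because uWV = u, so its polar form vanishes at uW, which is the
   adjointness relation.

   In (b) take for F the Bayes inverse of V with prior q, which is Fisher-adjoint
   to V for every channel.  A Markov co-embedding V is deterministic, since
   WV = 1 forces every row of V to be a point mass, and for a deterministic V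
   the Bayes inverse followed by V is the identity. *)

From Pilot Require Import Defs.
From HB Require Import structures.
From mathcomp Require Import all_boot all_order all_algebra.
From mathcomp Require Import all_classical all_reals all_analysis.
From mathcomp Require Import ring lra.
Import Order.TTheory GRing.Theory Num.Theory.
Local Open Scope classical_set_scope.
Local Open Scope ring_scope.

Set Implicit Arguments.
Unset Strict Implicit.

(* [iterD] alone would denote the ssrnat lemma on iterates. *)
Local Notation iterD := Defs.iterD.

Section Curves.
Variable R : realType.

Lemma is_derive_mulmx (V : normedModType R) m n1 n2 (g : V -> 'M[R]_(m, n1))
    (A : 'M[R]_(n1, n2)) x v :
  derivable g x v -> is_derive x v (fun t => g t *m A) ('D_v g x *m A).
Proof.
move=> dg; have dg_entry := (derivable_mxP g x v).1 dg.
have dAij i j : is_derive x v (fun t => (g t *m A) i j)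
    (\sum_k A k j *: 'D_v (fun t => g t i k) x).
  have -> : (fun t => (g t *m A) i j) = \sum_k (A k j \*: (fun t => g t i k)).
    by rewrite fct_sumE; apply/funext => t; rewrite mxE; apply: eq_bigr => k _;
      rewrite mulrC.
  apply: is_derive_sum => k; apply: is_deriveZ.
  exact: derivableP (dg_entry i k).
have dgA : derivable (fun t => g t *m A) x v.
  by apply/derivable_mxP => i j; have [] := dAij i j.
apply: DeriveDef => //; rewrite derive_mx //; apply/matrixP => i j.
rewrite mxE (derive_mx dg) mxE; have [_ ->] := dAij i j.
by apply: eq_bigr => k _; rewrite mxE mulrC.
Qed.

Lemma derive_mulmx (V : normedModType R) m n1 n2 (g : V -> 'M[R]_(m, n1))
    (A : 'M[R]_(n1, n2)) x v :
  derivable g x v -> 'D_v (fun t => g t *m A) x = 'D_v g x *m A.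
Proof. by move=> /(is_derive_mulmx A) []. Qed.

Lemma iterD_mulmx (V : normedModType R) m n1 n2 (U : set V)
    (g : V -> 'M[R]_(m, n1)) (A : 'M[R]_(n1, n2)) :
  open U -> smooth_on U g ->
  forall vs x, U x -> iterD vs (fun t => g t *m A) x = iterD vs g x *m A.
Proof.
move=> oU sg; elim=> [//|v vs IH] x Ux /=.
have Ux_nbhs : nbhs x U by rewrite openE in oU; exact: oU.
rewrite -(derive_mulmx A ((sg vs x Ux).2 v)).
by apply: near_eq_derive; near=> y; apply: IH; near: y.
Unshelve. all: by end_near.
Qed.

Lemma smooth_on_mulmx m n1 n2 (U : set R^o) (g : R^o -> 'M[R]_(m, n1))
    (A : 'M[R]_(n1, n2)) :
  open U -> smooth_on U g -> smooth_on U (fun t => g t *m A).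
Proof.
move=> oU sg vs x Ux.
have Ux_nbhs : nbhs x U by rewrite openE in oU; exact: oU.
have dvs v : derivable (iterD vs (fun t => g t *m A)) x v.
  apply: (@near_eq_derivable _ _ _ (fun y => iterD vs g y *m A)).
  - by near=> y; rewrite (iterD_mulmx A oU sg) //; near: y.
  - by have [] := is_derive_mulmx A ((sg vs x Ux).2 v).
split=> //; apply/differentiable_continuous/derivable1_diffP; exact: dvs.
Unshelve. all: by end_near.
Qed.

Lemma tangentSpace_mulmx n1 n2 (M : set 'rV[R]_n1) (N : set 'rV[R]_n2)
    (A : 'M[R]_(n1, n2)) p X :
  (forall z, M z -> N (z *m A)) ->
  tangentSpace M p X -> tangentSpace N (p *m A) (X *m A).
Proof.
move=> MN [gam [e [e0 sg g0 Mg dX]]].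
exists (fun t => gam t *m A), e; split => //.
- exact/smooth_on_mulmx/sg/interval_open.
- by rewrite g0.
- by move=> t /Mg /MN.
- have I0 : `]-e, e[%classic (0 : R^o) by rewrite /= in_itv /= oppr_lt0 e0.
  by rewrite derive_mulmx ?dX //; exact: (sg [::] 0 I0).2.
Qed.

Lemma tangentSpace_mulmx_id n (M : set 'rV[R]_n) (A : 'M[R]_n) p X :
  (forall z, M z -> z *m A = z) -> tangentSpace M p X -> X *m A = X.
Proof.
move=> MA [gam [e [e0 sg g0 Mg <-]]].
have I0 : `]-e, e[%classic (0 : R^o) by rewrite /= in_itv /= oppr_lt0 e0.
rewrite -derive_mulmx; last exact: (sg [::] 0 I0).2.
have I0_nbhs : nbhs (0 : R^o) `]-e, e[%classic.
  have oI : open (`]-e, e[%classic : set R^o) by exact: interval_open.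
  by rewrite openE in oI; exact: oI.
apply: near_eq_derive; near=> t; apply/MA/Mg.
by have : `]-e, e[%classic (t : R^o) by near: t.
Unshelve. all: by end_near.
Qed.

End Curves.

Section Fisher.
Variables (R : realType) (n : nat).
Implicit Types (p X Y Z : 'rV[R]_n) (T : set 'rV[R]_n) (a : 'rV[R]_n -> R).

Lemma fisherC p X Y : fisher p X Y = fisher p Y X.
Proof. by apply: eq_bigr => i _; rewrite (mulrC (X 0 i)). Qed.

Lemma fisher0l p Y : fisher p 0 Y = 0.
Proof. by rewrite /fisher big1 // => i _; rewrite mxE !mul0r. Qed.

Lemma fisher0r p X : fisher p X 0 = 0.
Proof. by rewrite fisherC fisher0l. Qed.

Lemma fisherBl p X Y Z : fisher p (X - Y) Z = fisher p X Z - fisher p Y Z.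
Proof.
by rewrite /fisher -sumrB; apply: eq_bigr => i _; rewrite !mxE !mulrBl.
Qed.

Lemma fisherBr p X Y Z : fisher p Z (X - Y) = fisher p Z X - fisher p Z Y.
Proof. by rewrite !(fisherC p Z) fisherBl. Qed.

Lemma fisher_sqrDZ p X Y (t : R) :
  fisher p (X + t *: Y) (X + t *: Y) =
  fisher p X X + 2 * t * fisher p X Y + t ^+ 2 * fisher p Y Y.
Proof.
rewrite /fisher !mulr_sumr -!big_split /=; apply: eq_bigr => i _; rewrite !mxE.
ring.
Qed.

Lemma fisher_eq0 p X : (forall i, 0 < p 0 i) -> fisher p X X = 0 -> X = 0.
Proof.
move=> p_gt0 /psumr_eq0P X0; apply/rowP => i; rewrite mxE.
have /eqP : X 0 i * X 0 i / p 0 i = 0.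
  apply: X0 => //= j _; apply: divr_ge0; [by rewrite -expr2 sqr_ge0 | exact: ltW].
by rewrite mulf_eq0 invr_eq0 (gt_eqF (p_gt0 i)) orbF mulf_eq0 orbb => /eqP.
Qed.

Definition riesz_rep T p a (u : 'rV[R]_n) :=
  T u /\ forall X, T X -> fisher p u X = a X.

Lemma riesz_rep_uniq T p a u u' : (forall i, 0 < p 0 i) ->
  riesz_rep T p a u -> riesz_rep T p a u' -> u = u'.
Proof.
move=> p_gt0 [Tu Hu] [Tu' Hu']; apply/eqP; rewrite -subr_eq0; apply/eqP.
apply: (fisher_eq0 p_gt0).
by rewrite fisherBl !fisherBr (Hu u) // (Hu u') // (Hu' u) // (Hu' u') // !subrr.
Qed.

Lemma sharpP T p a : (forall i, 0 < p 0 i) ->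
  (forall u, riesz_rep T p a u <-> u = sharp T p a) \/
  ((forall u, ~ riesz_rep T p a u) /\ sharp T p a = 0).
Proof.
move=> p_gt0; have [[u ru]|nr] := pselect (exists u, riesz_rep T p a u).
  have -> : sharp T p a = u.
    by apply: xget_unique => // u' ru'; exact: riesz_rep_uniq ru' ru.
  by left=> u'; split=> [ru'|->//]; exact: riesz_rep_uniq ru' ru.
right; split=> [u ru|]; first by apply: nr; exists u.
by apply: xgetPN => u ru; apply: nr; exists u.
Qed.
End Fisher.

Section CometricPullback.
Variables (R : realType) (n1 n2 : nat).
Variables (TM : set 'rV[R]_n1) (TN : set 'rV[R]_n2).
Variables (p : 'rV[R]_n1) (q : 'rV[R]_n2).
Variables (F : 'M[R]_(n1, n2)) (G : 'M[R]_(n2, n1)).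
Hypotheses (p_gt0 : forall i, 0 < p 0 i) (q_gt0 : forall i, 0 < q 0 i).
Hypothesis TMF : forall u, TM u -> TN (u *m F).
Hypothesis TNG : forall Y, TN Y -> TM (Y *m G).
Hypothesis FG_adjoint :
  forall u Y, TM u -> TN Y -> fisher q (u *m F) Y = fisher p u (Y *m G).
Hypothesis FGK : forall u, TM u -> u *m F *m G = u.

Lemma riesz_rep_mulmx a u :
  riesz_rep TM p a u -> riesz_rep TN q (pullback G a) (u *m F).
Proof.
move=> [TMu ua]; split=> [|Y TNY]; first exact: TMF.
by rewrite FG_adjoint // ua //; exact: TNG.
Qed.

Lemma riesz_rep_pullback a Y :
  riesz_rep TN q (pullback G a) Y -> riesz_rep TM p a (Y *m G).
Proof.
move=> [TNY Ya]; split=> [|X TMX]; first exact: TNG.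
by rewrite fisherC -FG_adjoint // fisherC Ya /pullback ?FGK //; exact: TMF.
Qed.

Lemma sharp_pullback a : sharp TN q (pullback G a) = sharp TM p a *m F.
Proof.
have [rM|[nrM ->]] := sharpP TM a p_gt0;
  have [rN|[nrN ->]] := sharpP TN (pullback G a) q_gt0.
- by apply/esym/rN/riesz_rep_mulmx/rM.
- by have [] := nrN _ (riesz_rep_mulmx ((rM _).2 erefl)).
- by have [] := nrM _ (riesz_rep_pullback ((rN _).2 erefl)).
- by rewrite mul0mx.
Qed.

Lemma sharp_tangent a : TM (sharp TM p a) \/ sharp TM p a = 0.
Proof.
have [rM|[_ ->]] := sharpP TM a p_gt0; last by right.
by left; case: ((rM _).2 erefl).
Qed.

Lemma cometric_pullback a b :
  cometric TM p a b = cometric TN q (pullback G a) (pullback G b).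
Proof.
rewrite /cometric !sharp_pullback.
have [TMa|->] := sharp_tangent a; last by rewrite mul0mx !fisher0l.
have [TMb|->] := sharp_tangent b; last by rewrite mul0mx !fisher0r.
by rewrite FG_adjoint ?FGK //; exact: TMF.
Qed.

End CometricPullback.

Section Monotonicity.
Variable R : realType.

Definition stochastic n1 n2 (W : 'M[R]_(n1, n2)) :=
  (forall x y, 0 <= W x y) /\ (forall x, \sum_y W x y = 1).

Lemma surj_channel_stochastic n1 n2 (W : 'M[R]_(n1, n2)) :
  surj_channel W -> stochastic W.
Proof. by case. Qed.

Lemma quadratic_ge0_coef_eq0 (B C : R) :
  0 <= C -> (forall t, 0 <= 2 * t * B + t ^+ 2 * C) -> B = 0.
Proof.
move=> C_ge0 /(_ (- B / (C + 1))); set t := - B / (C + 1) => Ht.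
have tE : t * (C + 1) = - B by rewrite /t divfK // gt_eqF // ltr_wpDl.
have : 0 <= (2 * t * B + t ^+ 2 * C) * (C + 1) ^+ 2.
  by apply: mulr_ge0 => //; exact: sqr_ge0.
have -> : (2 * t * B + t ^+ 2 * C) * (C + 1) ^+ 2 = - B ^+ 2 * (C + 2).
  transitivity (2 * (t * (C + 1)) * B * (C + 1) + (t * (C + 1)) ^+ 2 * C).
    by ring.
  by rewrite tE; ring.
move=> h; apply/eqP; rewrite -sqrf_eq0 eq_le sqr_ge0 andbT; nra.
Qed.

Lemma cauchy_schwarz_weighted n (w a b : 'I_n -> R) :
  (forall i, 0 <= w i) -> (forall i, 0 < b i) -> 0 < \sum_i w i * b i ->
  (\sum_i a i * w i) ^+ 2 / (\sum_i w i * b i) <= \sum_i a i ^+ 2 * w i / b i.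
Proof.
move=> w_ge0 b_gt0; set S0 := \sum_i w i * b i; set S1 := \sum_i a i * w i.
set S2 := \sum_i a i ^+ 2 * w i / b i => S0_gt0; pose c := S1 / S0.
have cS0 : c * S0 = S1 by rewrite /c divfK // gt_eqF.
have : 0 <= \sum_i w i * (a i - c * b i) ^+ 2 / b i.
  apply: sumr_ge0 => i _; apply: divr_ge0; last exact: ltW.
  by apply: mulr_ge0 => //; exact: sqr_ge0.
have -> : \sum_i w i * (a i - c * b i) ^+ 2 / b i = S2 - 2 * c * S1 + c ^+ 2 * S0.
  rewrite /S2 /S1 /S0 !mulr_sumr -sumrB -big_split /=; apply: eq_bigr => i _.
  by field; exact: lt0r_neq0.
move=> h; rewrite ler_pdivrMr //.
have : 0 <= (S2 - 2 * c * S1 + c ^+ 2 * S0) * S0.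
  by apply: mulr_ge0 => //; exact: ltW.
have -> : (S2 - 2 * c * S1 + c ^+ 2 * S0) * S0 =
          S2 * S0 - 2 * (c * S0) * S1 + (c * S0) ^+ 2 by ring.
rewrite cS0; lra.
Qed.

Lemma fisher_mulmx_le n1 n2 (V : 'M[R]_(n2, n1)) (q Z : 'rV[R]_n2) :
  stochastic V -> (forall y, 0 < q 0 y) -> (forall x, 0 < (q *m V) 0 x) ->
  fisher (q *m V) (Z *m V) (Z *m V) <= fisher q Z Z.
Proof.
move=> [V_ge0 V1] q_gt0 qV_gt0.
apply: (@le_trans _ _ (\sum_x \sum_y Z 0 y ^+ 2 * V y x / q 0 y)).
  apply: ler_sum => x _.
  have qVx : (q *m V) 0 x = \sum_y V y x * q 0 y.
    by rewrite mxE; apply: eq_bigr => y _; rewrite mulrC.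
  rewrite -expr2 [in X in X ^+ 2]mxE qVx.
  apply: (cauchy_schwarz_weighted (w := V^~ x)) => //; by rewrite -qVx.
rewrite exchange_big /=; apply: ler_sum => y _.
rewrite -[leRHS]mulr1 -(V1 y) mulr_sumr le_eqVlt; apply/predU1l/eq_bigr => x _.
by rewrite expr2; ring.
Qed.

Lemma fisher_adjoint_of_retraction n1 n2 (W : 'M[R]_(n1, n2)) (V : 'M[R]_(n2, n1))
    (p : 'rV[R]_n1) (q : 'rV[R]_n2) (u : 'rV[R]_n1) :
  stochastic W -> stochastic V ->
  (forall x, 0 < p 0 x) -> (forall y, 0 < q 0 y) ->
  q = p *m W -> p = q *m V -> u *m W *m V = u ->
  forall Y, fisher q (u *m W) Y = fisher p u (Y *m V).
Proof.
move=> sW sV p_gt0 q_gt0 qE pE uK Y.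
have p_gt0' : forall x, 0 < (q *m V) 0 x by rewrite -pE.
have q_gt0' : forall y, 0 < (p *m W) 0 y by rewrite -qE.
pose defect Z := fisher q Z Z - fisher p (Z *m V) (Z *m V).
have defect_ge0 Z : 0 <= defect Z.
  by rewrite subr_ge0 {1}pE; exact: fisher_mulmx_le.
have defect_uW : defect (u *m W) = 0.
  apply/eqP; rewrite subr_eq0 uK eq_le; apply/andP; split.
    by rewrite qE; exact: fisher_mulmx_le.
  by have := fisher_mulmx_le (u *m W) sV q_gt0 p_gt0'; rewrite uK -pE.
apply/eqP; rewrite -subr_eq0; apply/eqP.
apply: (quadratic_ge0_coef_eq0 (defect_ge0 Y)) => t.
have := defect_ge0 (u *m W + t *: Y).
rewrite /defect mulmxDl -scalemxAl uK !fisher_sqrDZ.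
have := defect_uW; rewrite /defect uK => /eqP; rewrite subr_eq0 => /eqP ->.
rewrite (fisherC p u); congr (0 <= _); ring.
Qed.
End Monotonicity.

Section MarkovMaps.
Variable R : realType.

Lemma ler_psum_term (I : finType) (F : I -> R) i :
  (forall j, 0 <= F j) -> F i <= \sum_j F j.
Proof. by move=> F_ge0; rewrite (bigD1 i) //= lerDl sumr_ge0. Qed.

Lemma mulmx_fix_Pdist n (A : 'M[R]_n) :
  (forall p, Pdist n p -> p *m A = p) -> A = 1%:M.
Proof.
move=> AK; apply/row_matrixP => x; rewrite !rowE mulmx1.
have n_gt0 : (0 < n)%N by case: n x {AK A} => [[]|].
pose u : 'rV[R]_n := const_mx n%:R^-1; pose e : 'rV[R]_n := delta_mx 0 x.
have Pu : Pdist n u.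
  split=> [i|]; first by rewrite mxE invr_gt0 ltr0n.
  under eq_bigr do rewrite mxE.
  by rewrite sumr_const card_ord -[_ *+ n]mulr_natr mulVf // pnatr_eq0 -lt0n.
have Pue : Pdist n (2^-1 *: (u + e)).
  split=> [i|].
    rewrite !mxE; apply: mulr_gt0; first by rewrite invr_gt0.
    by rewrite ltr_wpDr ?ler0n // invr_gt0 ltr0n.
  under eq_bigr do rewrite mxE [(u + e) _ _]mxE.
  rewrite -mulr_sumr big_split /= (proj2 Pu) (bigD1 x) //=.
  rewrite big1 => [|i /negbTE ix].
    by rewrite mxE !eqxx addr0 -[1 + 1]/(2%:R) mulVf ?pnatr_eq0.
  by rewrite mxE ix andbF.
have eE : e = 2 *: (2^-1 *: (u + e)) - u.
  by rewrite scalerA mulfV ?pnatr_eq0 // scale1r addrC addKr.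
by rewrite -/e {1}eE mulmxBl -scalemxAl (AK _ Pue) (AK _ Pu) -eE.
Qed.

Lemma psumr_gt0 (I : finType) (F : I -> R) i :
  (forall j, 0 <= F j) -> 0 < F i -> 0 < \sum_j F j.
Proof. by move=> F_ge0 /lt_le_trans; apply; exact: ler_psum_term. Qed.

Lemma Pdist_mulmx n1 n2 (V : 'M[R]_(n2, n1)) z :
  surj_channel V -> Pdist n2 z -> Pdist n1 (z *m V).
Proof.
move=> [V_ge0 V1 Vsurj] [z_gt0 z1]; split=> [x|].
  have [y Vyx] := Vsurj x; rewrite mxE.
  apply: (psumr_gt0 (i := y)) => [j|]; last exact: mulr_gt0.
  by apply: mulr_ge0 => //; exact: ltW.
under eq_bigr do rewrite mxE.
by rewrite exchange_big -z1; apply: eq_bigr => y _; rewrite -mulr_sumr V1 mulr1.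
Qed.

Lemma stochastic_retraction_fun n1 n2 (W : 'M[R]_(n1, n2)) (V : 'M[R]_(n2, n1)) :
  surj_channel W -> stochastic V -> W *m V = 1%:M ->
  exists f : 'I_n2 -> 'I_n1, forall y x, V y x = (x == f y)%:R.
Proof.
move=> [W_ge0 W1 Wsurj] [V_ge0 V1] WV1.
suff /fin_all_exists[f Vf] : forall y, exists x, forall x', V y x' = (x' == x)%:R.
  by exists f.
move=> y; have [x Wxy] := Wsurj y; exists x.
have V_le1 y' x' : V y' x' <= 1 by rewrite -(V1 y'); exact: ler_psum_term.
have Vyx : V y x = 1.
  have WVxx : \sum_y' W x y' * V y' x = 1.
    by move/matrixP: WV1 => /(_ x x); rewrite !mxE eqxx.
  have sum0 : \sum_y' W x y' * (1 - V y' x) = 0.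
    by under eq_bigr do rewrite mulrBr mulr1; rewrite sumrB W1 WVxx subrr.
  have term_ge0 y' : true -> 0 <= W x y' * (1 - V y' x).
    by rewrite mulr_ge0 // subr_ge0.
  have /eqP := psumr_eq0P term_ge0 sum0 (i := y) isT.
  by rewrite mulf_eq0 (gt_eqF Wxy) subr_eq0 => /eqP <-.
move=> x'; case: eqVneq => [->//|x'x].
have := V1 y; rewrite (bigD1 x) //= Vyx -[RHS]addr0 => /addrI /psumr_eq0P.
by apply=> // x'' _; exact: V_ge0.
Qed.

(* The posterior of the input y given the output x, for the prior q on the
   input of the channel V. *)
Definition bayes n1 n2 (V : 'M[R]_(n2, n1)) (q : 'rV[R]_n2) : 'M[R]_(n1, n2) :=
  \matrix_(x, y) (V y x * q 0 y / (q *m V) 0 x).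
End MarkovMaps.

Section BayesInverse.
Variable R : realType.
Variables (n1 n2 : nat) (V : 'M[R]_(n2, n1)) (q : 'rV[R]_n2).
Hypotheses (sV : surj_channel V) (Pq : Pdist n2 q).
Let p := q *m V.
Let p_gt0 x : 0 < p 0 x. Proof. by case: (Pdist_mulmx sV Pq). Qed.
Let q_gt0 y : 0 < q 0 y. Proof. by case: Pq. Qed.

Lemma bayes_Pdist z : Pdist n1 z -> Pdist n2 (z *m bayes V q).
Proof.
have [V_ge0 V1 _] := sV; move=> [z_gt0 z1]; split=> [y|].
  have [x /andP[_ Vyx]] : exists x, true && (0 < V y x).
    apply: psumr_neq0P => [x _|]; first exact: V_ge0.
    by rewrite V1; apply/eqP; exact: oner_neq0.
  rewrite mxE; apply: (psumr_gt0 (i := x)) => [j|]; rewrite mxE.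
    rewrite mulr_ge0 ?divr_ge0 ?mulr_ge0 //; exact: ltW.
  by apply: mulr_gt0 => //; apply: divr_gt0 => //; exact: mulr_gt0.
under eq_bigr do rewrite mxE.
rewrite exchange_big -z1; apply: eq_bigr => x _.
under eq_bigr do rewrite mxE.
rewrite -mulr_sumr -mulr_suml.
have -> : \sum_y V y x * q 0 y = p 0 x.
  by rewrite mxE; apply: eq_bigr => y _; rewrite mulrC.
by rewrite divff ?mulr1 // gt_eqF.
Qed.

Lemma bayes_mulmx : p *m bayes V q = q.
Proof.
have [_ V1 _] := sV; apply/rowP => y; rewrite mxE -[RHS]mul1r -(V1 y) mulr_suml.
by apply: eq_bigr => x _; rewrite [bayes _ _ _ _]mxE mulrC divfK // gt_eqF.
Qed.

Lemma bayes_adjoint u Y : fisher q (u *m bayes V q) Y = fisher p u (Y *m V).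
Proof.
rewrite /fisher.
under eq_bigr do rewrite mxE mulr_suml mulr_suml.
under [RHS]eq_bigr do rewrite mxE mulr_sumr mulr_suml.
rewrite exchange_big; apply: eq_bigr => x _; apply: eq_bigr => y _.
by rewrite mxE -/p; field; rewrite !lt0r_neq0.
Qed.

Lemma bayes_retraction (f : 'I_n2 -> 'I_n1) (u : 'rV[R]_n1) :
  (forall y x, V y x = (x == f y)%:R) -> u *m bayes V q *m V = u.
Proof.
move=> Vf.
have mulmxV (r : 'rV[R]_n2) x : (r *m V) 0 x = \sum_(y | f y == x) r 0 y.
  rewrite mxE [RHS]big_mkcond; apply: eq_bigr => y _.
  by rewrite Vf eq_sym; case: eqP; rewrite ?mulr1 ?mulr0.
have uB y : (u *m bayes V q) 0 y = u 0 (f y) * q 0 y / p 0 (f y).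
  rewrite mxE (bigD1 (f y)) //= big1 ?addr0 => [|x /negbTE xf]; rewrite mxE Vf.
    by rewrite eqxx mul1r mulrA.
  by rewrite xf mul0r mul0r mulr0.
apply/rowP => x; rewrite mulmxV.
under eq_bigr => y /eqP fy do rewrite uB fy mulrAC.
by rewrite -mulr_sumr -mulmxV -/p divfK // gt_eqF.
Qed.

End BayesInverse.

Theorem mainTheorem7 (R : realType) :
  (forall (n1 n2 : nat) (M : set 'rV[R]_n1) (N : set 'rV[R]_n2)
          (W : 'M[R]_(n1, n2)) (V : 'M[R]_(n2, n1)),
     submanifold M -> submanifold N ->
     surj_channel W -> surj_channel V ->
     (forall p, M p -> N (markov_map W p)) ->
     (forall q, N q -> M (markov_map V q)) ->
     (forall p, M p -> markov_map V (markov_map W p) = p) ->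
     forall p q, M p -> N q -> q = markov_map W p -> p = markov_map V q ->
     forall a b : 'rV[R]_n1 -> R,
       is_covector (tangentSpace M p) a -> is_covector (tangentSpace M p) b ->
       cometric (tangentSpace M p) p a b =
       cometric (tangentSpace N q) q (pullback V a) (pullback V b)) /\
  (forall (n1 n2 : nat) (V : 'M[R]_(n2, n1)),
     surj_channel V ->
     (exists W : 'M[R]_(n1, n2), surj_channel W /\
        forall p, Pdist n1 p -> markov_map V (markov_map W p) = p) ->
     forall q, Pdist n2 q ->
     forall a b : 'rV[R]_n1 -> R,
       is_covector (tangentSpace (Pdist n1) (markov_map V q)) a ->
       is_covector (tangentSpace (Pdist n1) (markov_map V q)) b ->
       cometric (tangentSpace (Pdist n1) (markov_map V q)) (markov_map V q) a b =
       cometric (tangentSpace (Pdist n2) q) q (pullback V a) (pullback V b)).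
Proof.
split.
- move=> n1 n2 M N W V [MP _] [NP _] sW sV MN NM WVK p q Mp Nq qE pE a b _ _.
  have [[p_gt0 _] [q_gt0 _]] := (MP p Mp, NP q Nq).
  have WVK_T u : tangentSpace M p u -> u *m W *m V = u.
    move=> Tu; rewrite -mulmxA; apply: (tangentSpace_mulmx_id _ Tu) => z Mz.
    by rewrite mulmxA; exact: WVK.
  apply: (cometric_pullback (F := W)) => // [u Tu|Y TY|u Y Tu _].
  + by rewrite qE; exact: tangentSpace_mulmx MN Tu.
  + by rewrite pE; exact: tangentSpace_mulmx NM TY.
  + exact: fisher_adjoint_of_retraction (surj_channel_stochastic sW)
      (surj_channel_stochastic sV) p_gt0 q_gt0 qE pE (WVK_T u Tu) Y.
- move=> n1 n2 V sV [W [sW WVK]] q Pq a b _ _.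
  have WV1 : W *m V = 1%:M.
    by apply: mulmx_fix_Pdist => p Pp; rewrite mulmxA; exact: WVK.
  have [f Vf] := stochastic_retraction_fun sW (surj_channel_stochastic sV) WV1.
  have [[qV_gt0 _] [q_gt0 _]] := (Pdist_mulmx sV Pq, Pq).
  apply: (cometric_pullback (F := bayes V q)) => // [u Tu|Y TY|u Y _ _|u _].
  + rewrite -{1}(bayes_mulmx sV Pq); apply: (tangentSpace_mulmx _ Tu) => z.
    exact: bayes_Pdist.
  + by apply: (tangentSpace_mulmx _ TY) => z; exact: Pdist_mulmx.
  + exact: bayes_adjoint.
  + exact: bayes_retraction Vf.
Qed.
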